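(* For every integer $k\ge1$ and variables $x_1,\dots,x_k$, from the axioms $\{0\le x_i\le1\}_{i\in[k]}$ there is a degree-$2k$ sum-of-squares derivation of $$\prod_{i=1}^kx_i-\Big(\prod_{i=1}^kx_i\Big)^2\le\sum_{i=1}^k(x_i-x_i^2).$$
   Context: A degree-$d$ sum-of-squares derivation of $p\le q$ from axioms $\{g_j\ge0\}$ means $q-p=s+\sum_t r_tG_t$ with $s,r_t$ sums of squares, each $G_t$ a product of axiom polynomials $g_j$, and all terms of degree at most $d$. *)

From HB Require Import structures.
From mathcomp Require Import all_boot all_order all_algebra.
From mathcomp Require Import mpoly.
Set Implicit Arguments. Unset Strict Implicit. Unset Printing Implicit Defensive.
Import Order.TTheory GRing.Theory Num.Theory.
Local Open Scope ring_scope.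

(* total degree at most d  (msize p = 1 + total degree, 0 for p = 0) *)
Definition deg_le (n : nat) (R : nzRingType) (p : {mpoly R[n]}) (d : nat) : Prop :=
  (msize p <= d.+1)%N.

Definition is_sos (n : nat) (R : nzRingType) (p : {mpoly R[n]}) : Prop :=
  exists s : seq {mpoly R[n]}, p = \sum_(q <- s) q ^+ 2.

(* A degree-d sum-of-squares derivation of p <= q from the axioms
   {g >= 0 | g \in A}:  q - p = s + \sum_t r_t G_t, where s and each r_t are
   sums of squares, each G_t is a product of axiom polynomials (a finite
   multiset, given as a sequence of elements of A), and s and each r_t G_t
   have degree at most d. *)
Definition sos_derivation (n : nat) (R : nzRingType) (A : seq {mpoly R[n]})
    (d : nat) (p q : {mpoly R[n]}) : Prop :=
  exists (s : {mpoly R[n]}) (terms : seq ({mpoly R[n]} * seq {mpoly R[n]})),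
    [/\ q - p = s + \sum_(t <- terms) t.1 * \prod_(g <- t.2) g,
        is_sos s, deg_le s d &
        forall t, t \in terms ->
          [/\ is_sos t.1, all (fun g => g \in A) t.2 &
              deg_le (t.1 * \prod_(g <- t.2) g) d]].

Definition box_axioms (k : nat) (R : nzRingType) : seq {mpoly R[k]} :=
  [seq 'X_i | i <- enum 'I_k] ++ [seq 1 - 'X_i | i <- enum 'I_k].

From HB Require Import structures.
From mathcomp Require Import all_boot all_order all_algebra.
From mathcomp Require Import mpoly.
From mathcomp Require Import ring zify.
Import Order.TTheory GRing.Theory Num.Theory.
Local Open Scope ring_scope.

(* Let b be the product of the variables so far and a a new variable.  Adding a to
   the product increases the gap sum_i (x_i - x_i^2) - (P - P^2) by
     (a - a^2) + (b - b^2) - (ab - a^2 b^2) = (1 - a)(a + b + ab)(1 - b),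
   and 1 - x_1...x_m telescopes as sum_j x_1...x_(j-1) (1 - x_j).  By induction
   the gap is a sum of products of at most 2k axioms x_i, 1 - x_i, i.e. a
   derivation with s = 0 and every multiplier r_t = 1. *)

Section SumOfProducts.

Variables (R : comNzRingType) (A : seq R).

Definition sum_of_products (d : nat) (p : R) : Prop :=
  exists c : seq (seq R),
    p = \sum_(t <- c) \prod_(g <- t) g /\
    {in c, forall t, (size t <= d)%N && all (fun g => g \in A) t}.

Definition boxed (x : R) : bool := (x \in A) && (1 - x \in A).

Lemma sum_of_products_prod {t} :
  all (fun g => g \in A) t -> sum_of_products (size t) (\prod_(g <- t) g).
Proof.
by move=> tA; exists [:: t]; rewrite big_seq1; split=> // _ /[!inE] /eqP ->; rewrite leqnn.
Qed.

Lemma sum_of_products_axiom {g} : g \in A -> sum_of_products 1 g.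
Proof. by move=> gA; have := @sum_of_products_prod [:: g]; rewrite big_seq1 /= gA; apply. Qed.

Lemma sum_of_products_le {d e p} :
  (d <= e)%N -> sum_of_products d p -> sum_of_products e p.
Proof.
move=> le_de [c [-> cP]]; exists c; split=> // t /cP /andP [le_td ->].
by rewrite (leq_trans le_td).
Qed.

Lemma sum_of_productsD d p q :
  sum_of_products d p -> sum_of_products d q -> sum_of_products d (p + q).
Proof.
move=> [c1 [-> c1P]] [c2 [-> c2P]]; exists (c1 ++ c2); rewrite big_cat.
by split=> // t; rewrite mem_cat => /orP [/c1P|/c2P].
Qed.

Lemma sum_of_productsM d e p q :
  sum_of_products d p -> sum_of_products e q -> sum_of_products (d + e) (p * q).
Proof.
move=> [c1 [-> c1P]] [c2 [-> c2P]].
exists [seq t1 ++ t2 | t1 <- c1, t2 <- c2]; split.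
  rewrite big_allpairs_dep mulr_suml; apply: eq_bigr => t1 _.
  by rewrite mulr_sumr; apply: eq_bigr => t2 _; rewrite big_cat.
move=> _ /allpairsP [[t1 t2] /= [/c1P /andP [s1 A1] /c2P /andP [s2 A2] ->]].
by rewrite size_cat leq_add // all_cat A1.
Qed.

Lemma boxed_mem {xs} : all boxed xs -> all (fun g => g \in A) xs.
Proof. by apply: sub_all => x /andP []. Qed.

Lemma sum_of_products_one_sub_prod ys :
  all boxed ys -> sum_of_products (size ys) (1 - \prod_(y <- ys) y).
Proof.
elim: ys => [_|y ys IH /= /andP [/andP [yA y'A] ysB]].
  by exists [::]; split; rewrite // !big_nil subrr.
have -> : 1 - \prod_(g <- y :: ys) g = (1 - y) + y * (1 - \prod_(g <- ys) g).
  by rewrite big_cons; ring.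
apply: sum_of_productsD.
  exact: sum_of_products_le (ltn0Sn _) (sum_of_products_axiom y'A).
by rewrite -add1n; apply: sum_of_productsM; [exact: sum_of_products_axiom | exact: IH].
Qed.

Lemma sum_of_products_box_gap xs :
  all boxed xs ->
  sum_of_products (2 * size xs)
    (\sum_(x <- xs) (x - x ^+ 2) - (\prod_(x <- xs) x - (\prod_(x <- xs) x) ^+ 2)).
Proof.
elim: xs => [_|a ys IH /= abox]; first by exists [::]; split; rewrite // !big_nil expr1n !subrr.
have /andP [/andP [aA a'A] ysB] := abox.
have ysA := boxed_mem ysB.
set b := \prod_(y <- ys) y.
have -> : \sum_(x <- a :: ys) (x - x ^+ 2)
            - (\prod_(x <- a :: ys) x - (\prod_(x <- a :: ys) x) ^+ 2)
          = (\sum_(x <- ys) (x - x ^+ 2) - (b - b ^+ 2))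
            + (1 - a) * (a + b + a * b) * (1 - b).
  by rewrite !big_cons -/b; ring.
rewrite mulnS; apply: sum_of_productsD.
  exact: sum_of_products_le (leq_addl _ _) (IH ysB).
have -> : (2 + 2 * size ys = 1 + (1 + size ys) + size ys)%N by lia.
apply: sum_of_productsM; last exact: sum_of_products_one_sub_prod.
apply: sum_of_productsM; first exact: sum_of_products_axiom.
have abA : sum_of_products (1 + size ys) (a * b).
  by have := @sum_of_products_prod (a :: ys); rewrite big_cons /= aA ysA; apply.
apply: sum_of_productsD abA; apply: sum_of_productsD.
  exact: sum_of_products_le (leq_addr _ _) (sum_of_products_axiom aA).
exact: sum_of_products_le (leq_addl _ _) (sum_of_products_prod ysA).
Qed.

End SumOfProducts.

Arguments sum_of_products {R}.
Arguments boxed {R}.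

Section Degree.

Variables (R : idomainType) (n : nat).
Implicit Types (p q : {mpoly R[n]}) (gs : seq {mpoly R[n]}).

Lemma deg_leM p q d e : deg_le p d -> deg_le q e -> deg_le (p * q) (d + e).
Proof.
rewrite /deg_le => le_pd le_qe.
have [->|p0] := eqVneq p 0; first by rewrite mul0r msize0.
have [->|q0] := eqVneq q 0; first by rewrite mulr0 msize0.
by rewrite msizeM //; move: le_pd le_qe; lia.
Qed.

Lemma deg_le_prod gs : {in gs, forall g, deg_le g 1} -> deg_le (\prod_(g <- gs) g) (size gs).
Proof.
elim: gs => [_|g gs IH gsP]; first by rewrite big_nil /deg_le msize1.
rewrite big_cons -[size _]add1n; apply: deg_leM; first by apply: gsP; rewrite mem_head.
by apply: IH => h hgs; apply: gsP; rewrite in_cons hgs orbT.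
Qed.

Lemma sos_derivation_of_sum_of_products (A : seq {mpoly R[n]}) d p q :
  {in A, forall g, deg_le g 1} -> sum_of_products A d (q - p) -> sos_derivation A d p q.
Proof.
move=> A1 [c [qp cP]]; exists 0, [seq (1, t) | t <- c]; split.
- by rewrite add0r qp big_map; apply: eq_bigr => t _; rewrite mul1r.
- by exists [::]; rewrite big_nil.
- by rewrite /deg_le msize0.
move=> _ /mapP [t /cP /andP [le_td tA] ->] /=; split=> //.
  by exists [:: 1]; rewrite big_seq1 expr1n.
have tdeg : deg_le (\prod_(g <- t) g) (size t) by apply: deg_le_prod => g /(allP tA) /A1.
by rewrite mul1r /deg_le (leq_trans tdeg) ?ltnS.
Qed.

End Degree.

Lemma deg_le_box_axioms (R : idomainType) k : {in box_axioms k R, forall g, deg_le g 1}.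
Proof.
move=> g; rewrite /box_axioms mem_cat /deg_le => /orP [] /mapP [i _ ->].
  by rewrite msizeX mdeg1.
by rewrite (leq_trans (msizeD_le _ _)) // msizeN msizeX mdeg1 msize1.
Qed.

Lemma boxed_box_variables (R : comNzRingType) k :
  all (boxed (box_axioms k R)) [seq 'X_i | i <- enum 'I_k].
Proof.
apply/allP => _ /mapP [i _ ->]; rewrite /boxed /box_axioms !mem_cat.
by apply/andP; split; [apply/orP; left | apply/orP; right]; apply: map_f; rewrite mem_enum.
Qed.

Theorem claimB2 (R : realFieldType) (k : nat) (hk : (1 <= k)%N) :
  sos_derivation (box_axioms k R) (2 * k)
    ((\prod_(i < k) 'X_i) - (\prod_(i < k) 'X_i) ^+ 2)
    (\sum_(i < k) ('X_i - 'X_i ^+ 2) : {mpoly R[k]}).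
Proof.
apply: sos_derivation_of_sum_of_products; first exact: deg_le_box_axioms.
have := @sum_of_products_box_gap _ _ _ (boxed_box_variables R k).
by rewrite size_map size_enum_ord !big_map.
Qed.
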